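(* Let $n\ge 1$, $U>0$, and let $a_1,\dots,a_n,b\in\mathbb{R}$ satisfy $a_1\neq 0$, $b\neq 0$ and $\sum_{i=1}^n a_i\neq 1$. Consider the latent linear dynamic system $$\boldsymbol{z}^{t+1}=\boldsymbol{A}\boldsymbol{z}^t+\boldsymbol{B}u^t,\qquad \boldsymbol{x}^t=g(\boldsymbol{z}^t),$$ where $\boldsymbol{z}^t\in\mathbb{R}^n$, $u^t\in(-U,U)$, $\boldsymbol{A}\in\mathbb{R}^{n\times n}$ is the companion matrix whose first $n-1$ rows are $\boldsymbol{e}_2^T,\dots,\boldsymbol{e}_n^T$ (the $(i,i+1)$ entries equal $1$, all other entries of these rows $0$) and whose last row is $(a_1,a_2,\dots,a_n)$, $\boldsymbol{B}=(0,\dots,0,b)^T\in\mathbb{R}^n$, and $g:\mathbb{R}^n\to\mathcal{X}\subset\mathbb{R}^m$ ($m\ge n$) is an unknown injective differentiable function. Fix an arbitrary nonzero constant $\hat b$ and set $\boldsymbol{\hat B}=(0,\dots,0,\hat b)^T$. Let a differentiable encoder $f:\mathcal{X}\to\mathbb{R}^n$ and a matrix $\boldsymbol{\hat A}$, of the same companion form as $\boldsymbol{A}$ but with an arbitrary last row $(\hat a_1,\dots,\hat a_n)$, be a solution of $$\min_{\boldsymbol{\hat A},\,f}\ \mathbb{E}\big[\|f(\boldsymbol{x}^{t+1})-\boldsymbol{\hat A}f(\boldsymbol{x}^t)-\boldsymbol{\hat B}u^t\|^2\big],$$ where $\boldsymbol{x}^{t+1}=g(\boldsymbol{A}\boldsymbol{z}^t+\boldsymbol{B}u^t)$,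 $\boldsymbol{x}^t=g(\boldsymbol{z}^t)$, and the expectation is taken over all states $\boldsymbol{z}^t\in\mathbb{R}^n$ and all admissible inputs $u^t\in(-U,U)$ (with unknown distributions). Define $\tau=f\circ g:\mathbb{R}^n\to\mathbb{R}^n$. Then $\tau(\boldsymbol{z})=\frac{\hat b}{b}\,\boldsymbol{z}$ for all $\boldsymbol{z}\in\mathbb{R}^n$, and $\boldsymbol{\hat A}=\boldsymbol{A}$.
   Context: This is a single-input linear system $q^{t+n}-a_nq^{t+n-1}-\cdots-a_1q^t=bu^t$ written in controllable canonical form with state $\boldsymbol{z}^t=(q^t,\dots,q^{t+n-1})^T$. The order $n$ is known. The input $u^t$ can be set to any value in $(-U,U)$ at any state. *)

From HB Require Import structures.
From mathcomp Require Import all_boot all_order all_algebra.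
From mathcomp Require Import all_classical all_reals all_analysis.
Set Implicit Arguments. Unset Strict Implicit. Unset Printing Implicit Defensive.
Import Order.TTheory GRing.Theory Num.Theory.
Import numFieldNormedType.Exports.
Local Open Scope ring_scope.

Definition companion (R : ringType) (n : nat) (a : 'I_n -> R) : 'M[R]_n :=
  \matrix_(i < n, j < n)
    if (i.+1 < n)%N then ((val j == i.+1)%N)%:R else a j.

Definition last_vec (R : ringType) (n : nat) (b : R) : 'cV[R]_n :=
  \col_(i < n) (if (i.+1 == n)%N then b else 0).

From HB Require Import structures.
From mathcomp Require Import all_boot all_order all_algebra.
From mathcomp Require Import all_classical all_reals all_analysis.
From mathcomp Require Import ring.
Import Order.TTheory GRing.Theory Num.Theory.
Import numFieldNormedType.Exports.
Local Open Scope ring_scope.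

(* With u = 0 the zero-loss identity says tau (A z) = Ah (tau z); since A is
   onto (a_1 <> 0), it becomes tau (w + u b e_n) = tau w + u bh e_n for small u,
   hence for all u.  So h := tau - (bh/b) id is invariant along e_n, and
   h (A z)_i = h z_(i+1) for i < n.  Pulling back through A, the last
   coordinate of h is invariant under every translation, and then, pushing
   forward through the onto map A, so is every earlier coordinate: h is
   constant and tau is affine.  Plugging an affine tau into tau A = Ah tau
   forces Ah = A and A (tau 0) = tau 0, and a companion matrix whose last row
   does not sum to 1 has no nonzero fixed vector. *)

Lemma ord_max_ge {n} {i : 'I_n.+1} : (n <= i)%N -> i = ord_max.
Proof. by move=> le_ni; apply/val_inj/eqP; rewrite eqn_leq -ltnS ltn_ord. Qed.

Section CompanionMatrix.
Variables (R : nzRingType) (n : nat).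

Lemma companion_mulE (a : 'I_n.+1 -> R) (z : 'cV[R]_n.+1) (i : 'I_n.+1) :
  (companion a *m z) i 0 =
  if (i < n)%N then z (inord i.+1) 0 else \sum_j a j * z j 0.
Proof.
rewrite mxE; under eq_bigr => j _ do rewrite mxE.
rewrite ltnS; case: ifP => // lt_in.
rewrite (bigD1 (inord i.+1)) //= inordK ?ltnS // eqxx mul1r big1 ?addr0 //.
move=> j neq_j; suff /negbTE -> : val j != i.+1 by rewrite mul0r.
by apply: contra neq_j => /eqP ji; apply/eqP/val_inj; rewrite /= inordK ?ji.
Qed.

Lemma last_vecE (x : R) : last_vec n.+1 x = x *: delta_mx ord_max 0.
Proof.
apply/matrixP => i k; rewrite (ord1 k) !mxE andbT eqSS.
have -> : (i == ord_max) = (val i == n) by [].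
by case: eqP; rewrite ?mulr1 ?mulr0.
Qed.

End CompanionMatrix.

Lemma companion_onto {R : fieldType} {n : nat} {a : 'I_n.+1 -> R} :
  a ord0 != 0 -> forall y : 'cV[R]_n.+1, exists z, companion a *m z = y.
Proof.
move=> a0_neq0 y.
pose z0 :=
  (y ord_max 0 - \sum_(j < n) a (lift ord0 j) * y (inord j) 0) / a ord0.
exists (\col_i (if (i : nat) == 0%N then z0 else y (inord i.-1) 0)).
apply/matrixP => i k; rewrite (ord1 k) companion_mulE; case: ifP => lt_in.
  by rewrite mxE inordK ?ltnS //= inord_val.
have -> : i = ord_max by apply: ord_max_ge; rewrite leqNgt lt_in.
rewrite big_ord_recl !mxE /=; under eq_bigr => j _ do rewrite mxE /=.
by rewrite /z0 mulrC divfK // subrK.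
Qed.

Lemma companion_fixed_eq0 (R : idomainType) n (a : 'I_n.+1 -> R)
    (K : 'cV[R]_n.+1) :
  \sum_i a i != 1 -> companion a *m K = K -> K = 0.
Proof.
move=> suma_neq1 AK.
have K_step k : (k < n)%N -> K (inord k.+1) 0 = K (inord k) 0.
  move=> lt_kn.
  by rewrite -[in RHS]AK companion_mulE inordK ?lt_kn // ltnS ltnW.
have K_const (j : 'I_n.+1) : K j 0 = K ord0 0.
  rewrite -(inord_val j); elim: (val j) (ltn_ord j) => [|k IH] lt_kn.
    by congr (K _ 0); apply/val_inj; rewrite /= inordK.
  by rewrite K_step // IH // ltnW.
have : K ord_max 0 = (\sum_i a i) * K ord0 0.
  rewrite -[in LHS]AK companion_mulE ltnn mulr_suml.
  by apply: eq_bigr => j _; rewrite K_const.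
rewrite K_const -{1}[K ord0 0]mul1r => /eqP; rewrite -subr_eq0 -mulrBl mulf_eq0.
rewrite subr_eq0 eq_sym (negbTE suma_neq1) /= => /eqP K0_eq0.
by apply/matrixP => i j; rewrite (ord1 j) K_const K0_eq0 mxE.
Qed.

Section ShiftInvariantMaps.
Variables (R : fieldType) (n : nat) (a : 'I_n.+1 -> R).
Variable h : 'cV[R]_n.+1 -> 'cV[R]_n.+1.
Hypothesis h_translate_last : forall z s, h (z + s *: delta_mx ord_max 0) = h z.
Hypothesis h_companion_shift : forall z (i : 'I_n.+1), (i < n)%N ->
  h (companion a *m z) i 0 = h z (inord i.+1) 0.
Hypothesis a0_neq0 : a ord0 != 0.

Definition coord_period (k : 'I_n.+1) (v : 'cV[R]_n.+1) :=
  forall z, h (z + v) k 0 = h z k 0.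

Lemma coord_periodD k v w :
  coord_period k v -> coord_period k w -> coord_period k (v + w).
Proof. by move=> Pv Pw z; rewrite addrA Pw Pv. Qed.

Lemma coord_period_last k s : coord_period k (s *: delta_mx ord_max 0).
Proof. by move=> z; rewrite h_translate_last. Qed.

Lemma coord_period_companion (i : 'I_n.+1) v : (i < n)%N ->
  coord_period i (companion a *m v) -> coord_period (inord i.+1) v.
Proof. by move=> lt_in Pv z; rewrite -!h_companion_shift // mulmxDr Pv. Qed.

(* A vector supported below k+1 is mapped by A to one supported below k,
   up to a multiple of e_n. *)
Lemma coord_period_lower k : (k <= n)%N -> forall v : 'cV[R]_n.+1,
  (forall i : 'I_n.+1, (k <= i)%N -> v i 0 = 0) -> coord_period (inord k) v.
Proof.
elim: k => [|k IH] le_kn v v_low.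
  have -> : v = 0 by apply/matrixP => i j; rewrite (ord1 j) v_low // mxE.
  by move=> z; rewrite addr0.
have lt_kn1 : (k < n.+1)%N by rewrite ltnS ltnW.
rewrite -[k in inord k.+1](@inordK n k) //; apply: coord_period_companion.
  by rewrite inordK.
set w := companion a *m v.
rewrite -(subrK (w ord_max 0 *: delta_mx ord_max 0) w).
apply: coord_periodD (coord_period_last _ _); apply: IH => [|i le_ki].
  exact: ltnW.
have -> : (w - w ord_max 0 *: delta_mx ord_max 0) i 0
    = w i 0 - w ord_max 0 * (i == ord_max)%:R.
  by rewrite !mxE eqxx andbT.
case: (ltnP i n) => [lt_in|le_ni].
  have /negbTE -> : i != ord_max by rewrite neq_ltn lt_in.
  by rewrite mulr0 subr0 /w companion_mulE lt_in v_low // inordK.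
rewrite (ord_max_ge le_ni).
by rewrite eqxx mulr1 subrr.
Qed.

Lemma coord_period_max v : coord_period ord_max v.
Proof.
rewrite -(subrK (v ord_max 0 *: delta_mx ord_max 0) v).
apply: coord_periodD (coord_period_last _ _).
have inord_n : inord n = ord_max :> 'I_n.+1 by apply/val_inj; rewrite /= inordK.
rewrite -[X in coord_period X]inord_n; apply: coord_period_lower => // i le_ni.
rewrite (ord_max_ge le_ni).
by rewrite !mxE !eqxx mulr1 subrr.
Qed.

Lemma coord_period_all k v : coord_period k v.
Proof.
suff P d : forall k : 'I_n.+1, (n <= k + d)%N -> forall v, coord_period k v.
  exact: (P n) (leq_addl _ _) v.
elim: d => [|d IH] {}k le_n_kd {}v.
  rewrite addn0 in le_n_kd; rewrite (ord_max_ge le_n_kd).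
  exact: coord_period_max.
have [le_n_kd'|lt_kd_n] := leqP n (k + d); first exact: IH.
have lt_kn : (k < n)%N by rewrite (leq_ltn_trans (leq_addr d k)).
have [v' <-] := companion_onto a0_neq0 v.
move=> x; have [z <-] := companion_onto a0_neq0 x.
rewrite -mulmxDr !h_companion_shift // IH //.
by rewrite inordK ?ltnS // addSnnS.
Qed.

Lemma shift_invariant_const z : h z = h 0.
Proof.
apply/matrixP => i j; rewrite (ord1 j).
by have := coord_period_all i z 0; rewrite add0r.
Qed.

End ShiftInvariantMaps.

Lemma translation_extend (R : archiRealFieldType) (V W : lmodType R)
    (f : V -> W) (v : V) (w : W) (U : R) : 0 < U ->
  (forall x u, `|u| < U -> f (x + u *: v) = f x + u *: w) ->
  forall x s, f (x + s *: v) = f x + s *: w.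
Proof.
move=> U_gt0 f_small x s.
have [N s_lt_NU] : exists N : nat, `|s| < N.+1%:R * U.
  exists (Num.Def.archi_bound (`|s| / U)); rewrite -ltr_pdivrMr //.
  have := archi_boundP (divr_ge0 (normr_ge0 s) (ltW U_gt0)).
  by move/lt_le_trans; apply; rewrite ler_nat.
have N_neq0 : N.+1%:R != 0 :> R by rewrite pnatr_eq0.
pose t := s / N.+1%:R.
have t_small : `|t| < U.
  by rewrite normrM normfV normr_nat ltr_pdivrMr ?ltr0n // mulrC.
have f_steps k : f (x + (t *+ k) *: v) = f x + (t *+ k) *: w.
  elim: k => [|k IH]; first by rewrite !mulr0n !scale0r !addr0.
  by rewrite mulrSr !scalerDl !addrA f_small // IH.
by have := f_steps N.+1; rewrite -mulr_natr divfK.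
Qed.

Section Identification.
Variables (R : archiRealFieldType) (n : nat) (U b bh : R) (a ah : 'I_n.+1 -> R).
Variable tau : 'cV[R]_n.+1 -> 'cV[R]_n.+1.
Hypotheses (U_gt0 : 0 < U) (a0_neq0 : a ord0 != 0) (b_neq0 : b != 0).
Hypothesis tau_step : forall z u, -U < u < U ->
  tau (companion a *m z + u *: last_vec n.+1 b)
  = companion ah *m tau z + u *: last_vec n.+1 bh.

Lemma tau_companion z : tau (companion a *m z) = companion ah *m tau z.
Proof.
by have := tau_step z 0; rewrite !scale0r !addr0 oppr_lt0 U_gt0; apply.
Qed.

Lemma tau_translate w s :
  tau (w + s *: last_vec n.+1 b) = tau w + s *: last_vec n.+1 bh.
Proof.
apply: translation_extend U_gt0 _ w s => {}w u u_small.
have [z <-] := companion_onto a0_neq0 w.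
by rewrite tau_step -?ltr_norml // tau_companion.
Qed.

Lemma tau_affine z : tau z = tau 0 + (bh / b) *: z.
Proof.
pose h z := tau z - (bh / b) *: z.
have hE y i : h y i 0 = tau y i 0 - bh / b * y i 0 by rewrite !mxE.
suff -> : tau 0 = h z by rewrite subrK.
rewrite (@shift_invariant_const _ _ a h) ?/h ?scaler0 ?subr0 // => {}z.
- move=> s; set e := delta_mx ord_max 0.
  have -> : s *: e = (s / b) *: last_vec n.+1 b.
    by rewrite last_vecE scalerA divfK.
  have scale_e : (s / b) *: (bh *: e) = (bh / b) *: ((s / b) *: (b *: e)).
    by rewrite !scalerA; congr (_ *: _); field.
  rewrite tau_translate !last_vecE scale_e scalerDr opprD addrACA.
  by rewrite subrr addr0.
- by move=> i lt_in; rewrite !hE tau_companion !companion_mulE lt_in.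
Qed.

Hypotheses (bh_neq0 : bh != 0) (suma_neq1 : \sum_i a i != 1).

Lemma companion_system_identified :
  (forall z, tau z = (bh / b) *: z) /\ companion ah = companion a.
Proof.
have c_neq0 : bh / b != 0 by rewrite mulf_neq0 ?invr_eq0.
have tau_affine_companion z :
    tau 0 + (bh / b) *: (companion a *m z)
    = companion ah *m tau 0 + (bh / b) *: (companion ah *m z).
  by rewrite -tau_affine tau_companion tau_affine mulmxDr scalemxAr.
have ah_fixed : companion ah *m tau 0 = tau 0.
  by have := tau_affine_companion 0; rewrite !mulmx0 !scaler0 !addr0.
have companion_eq : companion ah = companion a.
  apply/matrixP => i j.
  have := tau_affine_companion (delta_mx j 0); rewrite ah_fixed => /addrI.
  move=> /(congr1 (fun M : 'cV[R]_n.+1 => M i 0)).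
  by rewrite -!colE !mxE => /(mulfI c_neq0).
have tau0 : tau 0 = 0.
  by apply: companion_fixed_eq0 suma_neq1 _; rewrite -companion_eq.
by split=> // z; rewrite tau_affine tau0 add0r.
Qed.

End Identification.

Theorem theorem1 (R : realType) (n m : nat) (U b bh : R) (a ah : 'I_n -> R)
    (g : 'cV[R]_n -> 'cV[R]_m) (f : 'cV[R]_m -> 'cV[R]_n) :
  (0 < n)%N -> (n <= m)%N -> 0 < U ->
  (forall i : 'I_n, val i = 0%N -> a i != 0) ->
  b != 0 -> \sum_(i < n) a i != 1 -> bh != 0 ->
  injective g -> (forall z, differentiable g z) ->
  (forall z, differentiable f (g z)) ->
  (* zero-loss condition (the minimum of the objective is 0) *)
  (forall (z : 'cV[R]_n) (u : R), -U < u < U ->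
     f (g (companion a *m z + u *: last_vec n b))
     = companion ah *m f (g z) + u *: last_vec n bh) ->
  (forall z : 'cV[R]_n, f (g z) = (bh / b) *: z) /\ companion ah = companion a.
Proof.
case: n a ah g f => [//|n] a ah g f _ _ U_gt0 a0_neq0 b_neq0 suma_neq1 bh_neq0.
move=> _ _ _ zero_loss.
exact: (@companion_system_identified R n U b bh a ah (fun z => f (g z))
  U_gt0 (a0_neq0 ord0 erefl) b_neq0 zero_loss bh_neq0 suma_neq1).
Qed.
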